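(* Let $\mathcal M=(\mathbf M^{(\lambda)})_{\lambda>0}$ be a weight matrix on $\mathbb N_0^d$. (i) If for every $\lambda>0$ there exist $\kappa\ge\lambda$ and $A\ge1$ with $M^{(\lambda)}_{\alpha+e_j}\le A^{|\alpha|+1}M^{(\kappa)}_\alpha$ for all $\alpha\in\mathbb N_0^d$, $1\le j\le d$, then for every $\lambda>0$ there exist $\kappa\ge\lambda$ and $B_1,B_2\ge1$ such that for all $t\in\mathbb R^d$ $$(1+|t|)^{2(d+1)}\exp\omega_{\mathbf M^{(\kappa)}}(t)\le B_1\exp\omega_{\mathbf M^{(\lambda)}}(B_2t).$$ (ii) If for every $\lambda>0$ there exist $0<\kappa\le\lambda$ and $A\ge1$ with $M^{(\kappa)}_{\alpha+e_j}\le A^{|\alpha|+1}M^{(\lambda)}_\alpha$ for all $\alpha\in\mathbb N_0^d$, $1\le j\le d$, then for every $\lambda>0$ there exist $0<\kappa\le\lambda$ and $B_1,B_2\ge1$ such that for all $t\in\mathbb R^d$ $$(1+|t|)^{2(d+1)}\exp\omega_{\mathbf M^{(\lambda)}}(t)\le B_1\exp\omega_{\mathbf M^{(\kappa)}}(B_2t).$$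
   Context: A weight matrix is a family $\mathcal M=(\mathbf M^{(\lambda)})_{\lambda>0}$ with $\mathbf M^{(\lambda)}=(M^{(\lambda)}_\alpha)_{\alpha\in\mathbb N_0^d}$ sequences of positive reals, $M^{(\lambda)}_0=1$, and $M^{(\lambda)}_\alpha\le M^{(\kappa)}_\alpha$ for all $\alpha$ whenever $0<\lambda\le\kappa$. $e_j$ is the $j$-th unit vector, $|\alpha|=\sum\alpha_j$, $|t|$ the Euclidean norm. The associated weight function of $\mathbf M=(M_\alpha)$ is $\omega_{\mathbf M}(t)=\sup_{\alpha\in\mathbb N^d_{0,t}}\log\frac{|t^\alpha|}{M_\alpha}$ ($t\in\mathbb R^d$, possibly $+\infty$), where $\mathbb N^d_{0,t}=\{\alpha:\alpha_j=0\text{ whenever }t_j=0\}$ and $0^0:=1$. *)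

From HB Require Import structures.
From mathcomp Require Import all_boot all_order all_algebra.
From mathcomp Require Import all_classical all_reals all_analysis.
Set Implicit Arguments. Unset Strict Implicit. Unset Printing Implicit Defensive.
Import Order.TTheory GRing.Theory Num.Theory.
Local Open Scope ring_scope.
Local Open Scope classical_set_scope.

Definition mindex (d : nat) := 'I_d -> nat.

Definition mlen (d : nat) (a : mindex d) : nat := (\sum_(i < d) a i)%N.

Definition maddunit (d : nat) (a : mindex d) (j : 'I_d) : mindex d :=
  fun i => (a i + (i == j))%N.

Definition mzero (d : nat) : mindex d := fun _ => 0%N.

(* t^alpha = prod_j t_j^{alpha_j}, with 0^0 = 1 *)
Definition mpow (R : realType) (d : nat) (t : 'I_d -> R) (a : mindex d) : R :=
  \prod_(i < d) t i ^+ a i.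

Definition enorm (R : realType) (d : nat) (t : 'I_d -> R) : R :=
  Num.sqrt (\sum_(i < d) t i ^+ 2).

Definition Nd0 (R : realType) (d : nat) (t : 'I_d -> R) : set (mindex d) :=
  [set a | forall j, t j = 0 -> a j = 0%N].

Definition omegaM (R : realType) (d : nat) (M : mindex d -> R) (t : 'I_d -> R)
  : \bar R :=
  ereal_sup [set (ln (`|mpow t a| / M a))%:E | a in Nd0 t].

(* Represented as a
   function R -> mindex d -> R whose values at lambda <= 0 are irrelevant. *)
Definition weight_matrix (R : realType) (d : nat) (M : R -> mindex d -> R) : Prop :=
  [/\ forall lam a, 0 < lam -> 0 < M lam a,
      forall lam, 0 < lam -> M lam (@mzero d) = 1
    & forall lam kap a, 0 < lam -> lam <= kap -> M lam a <= M kap a].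

From HB Require Import structures.
From mathcomp Require Import all_boot all_order all_algebra.
From mathcomp Require Import all_classical all_reals all_analysis.
From mathcomp Require Import ring lra zify.
Import Order.TTheory GRing.Theory Num.Theory.
Set Implicit Arguments. Unset Strict Implicit. Unset Printing Implicit Defensive.
Local Open Scope ring_scope.

(* Iterating the shift condition N = 2(d+1) times gives, in case (i),
   M^(lam)_{a + N e_j} <= A^(N(|a|+N)) M^(kap)_a (case (ii) is symmetric), and the
   factor A^(N(|a|+N)) is absorbed by the dilation t -> A^N t.  Given t and a, let
   K = max(1, max_j |t_j|), so that 1 + |t| <= (d+1) K.  If K = 1, the index a itself
   bounds (1+|t|)^N |t^a| / M^(kap)_a since M^(lam) <= M^(kap); otherwise, for j with
   |t_j| = K, the index a + N e_j absorbs the extra factor K^N.  Taking suprema gives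
   B1 = (d+1)^N and B2 = A^N. *)

Section MultiIndex.
Variable d : nat.

Definition maddunitn (a : mindex d) (j : 'I_d) (n : nat) : mindex d :=
  fun i => (a i + (i == j) * n)%N.

Lemma maddunitn0 (a : mindex d) j : maddunitn a j 0 = a.
Proof. by apply: funext => i; rewrite /maddunitn muln0 addn0. Qed.

Lemma maddunitn1 (a : mindex d) j : maddunitn a j 1 = maddunit a j.
Proof. by apply: funext => i; rewrite /maddunitn /maddunit muln1. Qed.

Lemma maddunitnD (a : mindex d) j m n :
  maddunitn (maddunitn a j n) j m = maddunitn a j (m + n).
Proof. by apply: funext => i; rewrite /maddunitn -addnA -mulnDr [(n + m)%N]addnC. Qed.

Lemma mlen_maddunitn (a : mindex d) j n : mlen (maddunitn a j n) = (mlen a + n)%N.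
Proof.
rewrite /mlen /maddunitn big_split /=; congr (_ + _)%N.
by rewrite (bigD1 j) //= eqxx mul1n big1 ?addn0 // => i /negbTE ->.
Qed.

Variable R : realType.

Lemma mpow_maddunitn (t : 'I_d -> R) (a : mindex d) j n :
  mpow t (maddunitn a j n) = mpow t a * t j ^+ n.
Proof.
rewrite /mpow /maddunitn; under eq_bigr do rewrite exprD.
rewrite big_split /=; congr (_ * _).
by rewrite (bigD1 j) //= eqxx mul1n big1 ?mulr1 // => i /negbTE ->; rewrite mul0n.
Qed.

Lemma mpowZ (c : R) (t : 'I_d -> R) (a : mindex d) :
  mpow (fun i => c * t i) a = c ^+ mlen a * mpow t a.
Proof.
rewrite /mpow /mlen; under eq_bigr do rewrite exprMn.
by rewrite big_split /= prodrXr.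
Qed.

Lemma Nd0Z (c : R) (t : 'I_d -> R) : c != 0 -> Nd0 (fun i => c * t i) = Nd0 t.
Proof.
move=> c0; rewrite predeqE => a; split => Ha j tj; apply: Ha.
  by rewrite tj mulr0.
by move/eqP: tj; rewrite mulf_eq0 (negbTE c0) => /eqP.
Qed.

Lemma normr_mpow_gt0 (t : 'I_d -> R) (a : mindex d) : Nd0 t a -> 0 < `|mpow t a|.
Proof.
move=> Ha; rewrite normr_gt0; apply/prodf_neq0 => i _.
by have [/Ha ->|ti0] := eqVneq (t i) 0; rewrite ?expr0 ?oner_neq0 ?expf_neq0.
Qed.

Lemma enorm_le (t : 'I_d -> R) (K : R) :
  0 <= K -> (forall i, `|t i| <= K) -> enorm t <= d%:R * K.
Proof.
move=> K0 tK; rewrite -[d%:R * K]ger0_norm ?mulr_ge0 // -sqrtr_sqr.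
apply: ler_wsqrtr; apply: (@le_trans _ _ (\sum_(i < d) K ^+ 2)).
  by apply: ler_sum => i _; rewrite -real_normK ?num_real // lerXn2r ?nnegrE.
rewrite sumr_const card_ord -[_ *+ d]mulr_natr exprMn mulrC ler_wpM2r ?sqr_ge0 //.
by rewrite -natrX ler_nat; nia.
Qed.

Lemma add1_enorm_le (t : 'I_d -> R) (K : R) :
  1 <= K -> (forall i, `|t i| <= K) -> 1 + enorm t <= d.+1%:R * K.
Proof.
move=> K1 /(enorm_le (le_trans ler01 K1)) tK.
by rewrite -addn1 natrD mulrDl mul1r addrC lerD.
Qed.

End MultiIndex.

Section ShiftBounded.
Variables (R : realType) (d : nat).

Definition shift_bounded (n : nat) (A : R) (M1 M2 : mindex d -> R) :=
  forall a j, M1 (maddunitn a j n) <= A ^+ (n * (mlen a + n)) * M2 a.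

Lemma shift_bounded0 (M : mindex d -> R) : shift_bounded 0 1 M M.
Proof. by move=> a j; rewrite maddunitn0 expr1n mul1r. Qed.

Lemma shift_bounded1 (A : R) (M1 M2 : mindex d -> R) :
  (forall a j, M1 (maddunit a j) <= A ^+ (mlen a).+1 * M2 a) ->
  shift_bounded 1 A M1 M2.
Proof. by move=> HA a j; rewrite maddunitn1 mul1n addn1. Qed.

Lemma shift_bounded_trans m n (A B : R) (M1 M2 M3 : mindex d -> R) :
  1 <= A -> 1 <= B -> (forall a, 0 <= M3 a) ->
  shift_bounded m A M1 M2 -> shift_bounded n B M2 M3 ->
  shift_bounded (m + n) (Num.max A B) M1 M3.
Proof.
move=> A1 B1 M3ge0 HA HB a j; set C := Num.max A B.
have C1 : 1 <= C by rewrite le_max A1.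
rewrite -maddunitnD; apply: (le_trans (HA _ _)); rewrite mlen_maddunitn.
apply: le_trans (ler_wpM2l (exprn_ge0 _ (le_trans ler01 A1)) (HB a j)) _.
rewrite mulrA ler_wpM2r //.
have CA : A <= C by rewrite le_max lexx.
have CB : B <= C by rewrite le_max lexx orbT.
apply: (@le_trans _ _ (C ^+ (m * (mlen a + n + m)) * C ^+ (n * (mlen a + n)))).
  by apply: ler_pM; rewrite ?exprn_ge0 ?lerXn2r ?nnegrE //; lra.
by rewrite -exprD ler_weXn2l //; nia.
Qed.
End ShiftBounded.

Section Ratio.
Variables (R : realType) (d : nat).
Implicit Types (M : mindex d -> R) (t s : 'I_d -> R) (a b : mindex d).

Definition mratio M t a : R := `|mpow t a| / M a.

Lemma mratio_gt0 M t a : 0 < M a -> Nd0 t a -> 0 < mratio M t a.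
Proof. by move=> Ma /normr_mpow_gt0 ta; rewrite divr_gt0. Qed.

Lemma mratio_scale_le M1 M2 (c : R) t a :
  1 <= c -> 0 < M2 a -> M2 a <= M1 a ->
  mratio M1 t a <= mratio M2 (fun i => c * t i) a.
Proof.
move=> c1 M2a M21; rewrite /mratio mpowZ normrM normrX ger0_norm; last lra.
have M1a : 0 < M1 a by exact: lt_le_trans M21.
apply: ler_pM => //; first by rewrite invr_ge0 ltW.
  by rewrite ler_peMl ?exprn_ege1.
by rewrite lef_pV2 ?posrE.
Qed.

Lemma mratio_maddunitn_ge n (A : R) M1 M2 t a j :
  1 <= A -> 0 < M1 a -> 0 < M2 (maddunitn a j n) -> shift_bounded n A M2 M1 ->
  `|t j| ^+ n * mratio M1 t a <= mratio M2 (fun i => A ^+ n * t i) (maddunitn a j n).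
Proof.
move=> A1 M1a M2b HA; set An := A ^+ (n * (mlen a + n)).
have An0 : 0 < An by rewrite exprn_gt0 //; lra.
rewrite /mratio mpowZ mpow_maddunitn mlen_maddunitn -exprM -/An.
rewrite normrM (ger0_norm (ltW An0)) ler_pdivlMr //.
apply: le_trans (ler_wpM2l _ (HA a j)) _.
  by rewrite mulr_ge0 ?exprn_ge0 // divr_ge0 // ltW.
rewrite normrM normrX le_eqVlt; apply/orP; left; apply/eqP.
rewrite -/An; move: (`|t j| ^+ n) (`|mpow t a|) => x p.
by field; rewrite gt_eqF.
Qed.

Lemma mratio_shift_dominated n (A : R) M1 M2 t a :
  (forall b, 0 < M2 b) -> (forall b, M2 b <= M1 b) -> 1 <= A ->
  shift_bounded n A M2 M1 -> Nd0 t a ->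
  exists2 b, Nd0 t b &
    (1 + enorm t) ^+ n * mratio M1 t a <= d.+1%:R ^+ n * mratio M2 (fun i => A ^+ n * t i) b.
Proof.
move=> M2pos M21 A1 HA Ha; have M1pos b : 0 < M1 b := lt_le_trans (M2pos b) (M21 b).
have [K [b [K1 tK Hb Hab]]] : exists K b, [/\ 1 <= K, forall i, `|t i| <= K, Nd0 t b &
    K ^+ n * mratio M1 t a <= mratio M2 (fun i => A ^+ n * t i) b].
  have [small|/existsNP [i /negP]] := pselect (forall i, `|t i| <= 1).
    exists 1, a; split => //; rewrite expr1n mul1r.
    exact/mratio_scale_le/M21/M2pos/exprn_ege1.
  rewrite -ltNge => ti1.
  have [j _ tj] := arg_maxP (fun k => `|t k|) (isT : predT i).
  have tj1 : 1 < `|t j| := lt_le_trans ti1 (tj i isT).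
  exists `|t j|, (maddunitn a j n); split; [exact: ltW | by move=> k; exact: tj | |].
    move=> k tk; rewrite /maddunitn (Ha k tk); case: eqP => // kj.
    by move: tj1; rewrite -kj tk normr0 ltr10.
  exact: mratio_maddunitn_ge.
exists b => //; apply: le_trans (ler_wpM2l (exprn_ge0 _ (ler0n _ _)) Hab).
rewrite [X in _ <= X]mulrA -exprMn ler_wpM2r ?lerXn2r ?nnegrE ?add1_enorm_le //.
- exact/ltW/mratio_gt0.
- by rewrite addr_ge0 ?sqrtr_ge0.
- by rewrite mulr_ge0 //; lra.
Qed.

Lemma expeR_omegaM_le M1 M2 t s (c C : R) :
  0 < c -> 0 < C -> (forall a, 0 < M1 a) -> (forall b, 0 < M2 b) ->
  (forall a, Nd0 t a -> exists2 b, Nd0 s b & c * mratio M1 t a <= C * mratio M2 s b) ->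
  (c%:E * expeR (omegaM M1 t) <= C%:E * expeR (omegaM M2 s))%E.
Proof.
move=> c0 C0 M1pos M2pos Hab.
have Cc0 : 0 < C / c by rewrite divr_gt0.
have omega_le : (omegaM M1 t <= (ln (C / c))%:E + omegaM M2 s)%E.
  apply: ge_ereal_sup => _ [a Ha <-]; have [b Hb le_ab] := Hab a Ha.
  have ra := mratio_gt0 (M1pos a) Ha; have rb := mratio_gt0 (M2pos b) Hb.
  apply: (@le_trans _ _ ((ln (C / c))%:E + (ln (mratio M2 s b))%:E)%E).
    rewrite -EFinD lee_fin -lnM // ler_ln ?posrE ?(mulr_gt0 Cc0 rb) //.
    by rewrite mulrAC ler_pdivlMr // mulrC.
  by apply: leeD2l; apply: ereal_sup_ubound; exists b.
apply: (@le_trans _ _ (c%:E * expeR ((ln (C / c))%:E + omegaM M2 s))%E).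
  by rewrite lee_pmul2l ?lte_fin // lee_expeR.
by rewrite expeRD muleA -EFinM lnK ?posrE // mulrC divfK ?gt_eqF.
Qed.

Lemma expeR_omegaM_shift n (A : R) M1 M2 t :
  (forall b, 0 < M2 b) -> (forall b, M2 b <= M1 b) -> 1 <= A ->
  shift_bounded n A M2 M1 ->
  (((1 + enorm t) ^+ n)%:E * expeR (omegaM M1 t)
    <= (d.+1%:R ^+ n)%:E * expeR (omegaM M2 (fun i => (A ^+ n * t i)%R)))%E.
Proof.
move=> M2pos M21 A1 HA; apply: expeR_omegaM_le => //.
- by rewrite exprn_gt0 // ltr_wpDr ?sqrtr_ge0.
- by move=> b; exact: lt_le_trans (M2pos b) (M21 b).
move=> a Ha; have [b Hb le_ab] := mratio_shift_dominated M2pos M21 A1 HA Ha.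
by exists b; rewrite // Nd0Z // gt_eqF // exprn_gt0 //; lra.
Qed.

End Ratio.

Section WeightMatrix.
Variables (R : realType) (d : nat) (M : R -> mindex d -> R).
Hypothesis WM : weight_matrix M.

Lemma weight_matrix_shift_up :
  (forall lam, 0 < lam -> exists kap A : R, lam <= kap /\ 1 <= A /\
      forall a j, M lam (maddunit a j) <= A ^+ (mlen a).+1 * M kap a) ->
  forall n lam, 0 < lam ->
    exists kap A : R, lam <= kap /\ 1 <= A /\ shift_bounded n A (M lam) (M kap).
Proof.
have [Mpos _ _] := WM; move=> Hstep; elim=> [|n IHn] lam lam0.
  by exists lam, 1; do !split => //; exact: shift_bounded0.
have [lam' [A [ll' [A1 /shift_bounded1 HA]]]] := Hstep lam lam0.
have [kap [B [l'k [B1 HB]]]] := IHn lam' (lt_le_trans lam0 ll').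
exists kap, (Num.max A B); do !split; first exact: le_trans l'k.
  by rewrite le_max A1.
rewrite -add1n; apply: shift_bounded_trans HA HB => // a.
by rewrite ltW // Mpos // (lt_le_trans lam0) // (le_trans ll').
Qed.

Lemma weight_matrix_shift_down :
  (forall lam, 0 < lam -> exists kap A : R, 0 < kap /\ kap <= lam /\ 1 <= A /\
      forall a j, M kap (maddunit a j) <= A ^+ (mlen a).+1 * M lam a) ->
  forall n lam, 0 < lam ->
    exists kap A : R, 0 < kap /\ kap <= lam /\ 1 <= A /\ shift_bounded n A (M kap) (M lam).
Proof.
have [Mpos _ _] := WM; move=> Hstep; elim=> [|n IHn] lam lam0.
  by exists lam, 1; do !split => //; exact: shift_bounded0.
have [lam' [B [lam'0 [l'l [B1 HB]]]]] := IHn lam lam0.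
have [kap [A [kap0 [kl' [A1 /shift_bounded1 HA]]]]] := Hstep lam' lam'0.
exists kap, (Num.max A B); do !split => //; first exact: le_trans l'l.
  by rewrite le_max A1.
rewrite -add1n; apply: shift_bounded_trans HA HB => // a.
by rewrite ltW // Mpos.
Qed.

End WeightMatrix.

Theorem lemma3p2 (R : realType) (d : nat) (M : R -> mindex d -> R) :
  weight_matrix M ->
  ((forall lam, 0 < lam -> exists kap A : R, lam <= kap /\ 1 <= A /\
      forall (a : mindex d) (j : 'I_d),
        M lam (maddunit a j) <= A ^+ (mlen a).+1 * M kap a) ->
   forall lam, 0 < lam -> exists kap B1 B2 : R, lam <= kap /\ 1 <= B1 /\ 1 <= B2 /\
      forall t : 'I_d -> R,
        (((1 + enorm t) ^+ (2 * d.+1))%:E * expeR (omegaM (M kap) t)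
          <= B1%:E * expeR (omegaM (M lam) (fun i => (B2 * t i)%R)))%E)
  /\
  ((forall lam, 0 < lam -> exists kap A : R, 0 < kap /\ kap <= lam /\ 1 <= A /\
      forall (a : mindex d) (j : 'I_d),
        M kap (maddunit a j) <= A ^+ (mlen a).+1 * M lam a) ->
   forall lam, 0 < lam -> exists kap B1 B2 : R, 0 < kap /\ kap <= lam /\ 1 <= B1 /\ 1 <= B2 /\
      forall t : 'I_d -> R,
        (((1 + enorm t) ^+ (2 * d.+1))%:E * expeR (omegaM (M lam) t)
          <= B1%:E * expeR (omegaM (M kap) (fun i => (B2 * t i)%R)))%E).
Proof.
move=> WM; have [Mpos _ Mmono] := WM; set N := (2 * d.+1)%N.
have B1_ge1 : 1 <= (d.+1%:R : R) ^+ N by rewrite exprn_ege1 // ler1n.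
split=> [Hstep lam lam0 | Hstep lam lam0].
  have [kap [A [lk [A1 HA]]]] := weight_matrix_shift_up WM Hstep N lam0.
  exists kap, (d.+1%:R ^+ N), (A ^+ N); do !split => //; first exact: exprn_ege1.
  by move=> t; apply: expeR_omegaM_shift => // b; [exact: Mpos | exact: Mmono].
have [kap [A [kap0 [kl [A1 HA]]]]] := weight_matrix_shift_down WM Hstep N lam0.
exists kap, (d.+1%:R ^+ N), (A ^+ N); do !split => //; first exact: exprn_ege1.
by move=> t; apply: expeR_omegaM_shift => // b; [exact: Mpos | exact: Mmono].
Qed.
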